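(* Let $D\subset\mathbb{C}^n$ be a bounded $\alpha$-regular domain, $E\subset D$, and $\psi$ a bounded function on $E$ with $\sup_E\psi<0$. Then for all $z\in D$, \[ -\inf_{w\in E}\psi(w)\,\omega^*_\alpha(z,E,D)\le\omega^*_\alpha(z,E,D,\psi)\le-\sup_{w\in E}\psi(w)\,\omega^*_\alpha(z,E,D). \]
   Context: Fix a closed, strictly positive differential form $\alpha$ of bidegree $(n-1,n-1)$ with $C^1$ coefficients on an open subset of $\mathbb{C}^n$ containing all sets considered. Let $d=\partial+\bar\partial$, $d^c=(\bar\partial-\partial)/(4i)$. For an open set $\Omega$, $u\in L^1_{loc}(\Omega)$ is $\alpha$-subharmonic ($u\in\alpha\text{-}sh(\Omega)$) if it is strongly upper semicontinuous (upper semicontinuous, and for every $z^0\in\Omega$ and every set $A$ of full Lebesgue measure near $z^0$, $\limsup_{z\to z^0,z\in A}u(z)=u(z^0)$) and $\int u\,\alpha\wedge dd^c\omega\ge0$ for every nonnegative test function $\omega$; $u\equiv-\infty$ is also allowed. A bounded domain $D$ is $\alpha$-regular if there is $\rho\in\alpha\text{-}sh(D)$ with $\rho<0$ on $D$ and $\rho\to0$ at $\partial D$. $\mathcal U(E,D,\psi)$ is the class of $u\in\alpha\text{-}sh(D)$ with $u<0$ on $D$ and $u\le\psi$ on $E$; $\omega_\alpha(z,E,D,\psi)=\sup\{u(z):u\in\mathcal U(E,D,\psi)\}$ and $\omega^*_\alpha(z,E,D,\psi)=\limsup_{w\to z}\omega_\alpha(w,E,D,\psi)$. The unweighted $\alpha$-subharmonic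 measure is $\omega^*_\alpha(z,E,D):=\omega^*_\alpha(z,E,D,-1)$ (i.e. with $\psi\equiv-1$). *)

From HB Require Import structures.
From mathcomp Require Import all_boot all_order all_algebra.
From mathcomp Require Import all_classical all_reals all_analysis measurable_realfun.
From mathcomp Require Import complex.
Set Implicit Arguments.
Unset Strict Implicit.
Unset Printing Implicit Defensive.
Import Order.TTheory GRing.Theory Num.Theory.
Import numFieldNormedType.Exports.
Local Open Scope classical_set_scope.
Local Open Scope ring_scope.

Section AlphaSH.
Context {R : realType}.

(** C^n is identified with R^(2n) = 'rV[R]_(n + n):
    z_j = x_j + i y_j with x_j = z ord0 (lshift n j), y_j = z ord0 (rshift n j). *)
Definition pt (n : nat) := 'rV[R]_(n + n).
Definition xco n (j : 'I_n) : 'I_(n + n) := lshift n j.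
Definition yco n (j : 'I_n) : 'I_(n + n) := rshift n j.

Definition ev m (p : 'I_m) : 'rV[R]_m := delta_mx ord0 p.
Definition pd m (p : 'I_m) (f : 'rV[R]_m -> R) : 'rV[R]_m -> R :=
  fun x => derive f x (ev p).
Definition pds m (s : seq 'I_m) (f : 'rV[R]_m -> R) : 'rV[R]_m -> R :=
  foldr (fun p g => pd p g) f s.

Definition C1_on m (U : set 'rV[R]_m) (g : 'rV[R]_m -> R) :=
  {in U, continuous g} /\
  forall p, (forall x, U x -> derivable g x (ev p)) /\ {in U, continuous (pd p g)}.
Definition smooth m (f : 'rV[R]_m -> R) :=
  forall s : seq 'I_m, continuous (pds s f) /\
    forall p x, derivable (pds s f) x (ev p).

Definition test_fun m (O : set 'rV[R]_m) (w : 'rV[R]_m -> R) :=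
  smooth w /\ (forall x, 0 <= w x) /\
  exists K : set 'rV[R]_m, compact K /\ K `<=` O /\ forall x, ~ K x -> w x = 0.

Definition cpd m (p : 'I_m) (g : 'rV[R]_m -> R[i]) (x : 'rV[R]_m) : R[i] :=
  Complex (pd p (fun y => complex.Re (g y)) x) (pd p (fun y => complex.Im (g y)) x).
Definition dz n (j : 'I_n) (g : pt n -> R[i]) : pt n -> R[i] :=
  fun x => (cpd (xco j) g x - Complex 0 1 * cpd (yco j) g x) / 2%:R.
Definition dzb n (j : 'I_n) (g : pt n -> R[i]) : pt n -> R[i] :=
  fun x => (cpd (xco j) g x + Complex 0 1 * cpd (yco j) g x) / 2%:R.

(** A (n-1,n-1)-form alpha = sum_{j,k} a_{jk} beta_{jk}, where beta_{jk} is the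
    basis (n-1,n-1)-form dual to i dz_j /\ dzbar_k, i.e.
    i dz_j /\ dzbar_k /\ beta_{lm} = delta_{jl} delta_{km} dV.
    alpha is given by its coefficient matrix a. *)
Definition C1_coeffs_on n (U : set (pt n)) (a : pt n -> 'M[R[i]]_n) :=
  forall j k, C1_on U (fun x => complex.Re (a x j k)) /\
              C1_on U (fun x => complex.Im (a x j k)).
(* alpha real *)
Definition hermitian_on n (U : set (pt n)) (a : pt n -> 'M[R[i]]_n) :=
  forall x, U x -> forall j k, a x k j = conjc (a x j k).
(* alpha /\ i g /\ gbar > 0 for every nonzero (1,0)-covector g *)
Definition posdef_on n (U : set (pt n)) (a : pt n -> 'M[R[i]]_n) :=
  forall x, U x -> forall g : 'I_n -> R[i], (exists j, g j != 0) ->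
    0 < \sum_j \sum_k a x j k * g j * conjc (g k).
(* d alpha = 0, i.e. del alpha = 0 and delbar alpha = 0 *)
Definition dclosed_on n (U : set (pt n)) (a : pt n -> 'M[R[i]]_n) :=
  forall x, U x ->
    (forall k, \sum_j dz j (fun y => a y j k) x = 0) /\
    (forall j, \sum_k dzb k (fun y => a y j k) x = 0).
Definition closed_strictly_positive_form n (U : set (pt n)) (a : pt n -> 'M[R[i]]_n) :=
  open U /\ C1_coeffs_on U a /\ hermitian_on U a /\ posdef_on U a /\ dclosed_on U a.

(** alpha /\ dd^c w = c * (Lop a w) dV with a constant c > 0 *)
Definition Lop n (a : pt n -> 'M[R[i]]_n) (w : pt n -> R) (x : pt n) : R :=
  complex.Re (\sum_j \sum_k a x j k * dz j (dzb k (fun y => Complex (w y) 0)) x).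

(** Lebesgue integral on R^m, as iterated one-dimensional Lebesgue integrals *)
Fixpoint iint (m : nat) : ('rV[R]_m -> \bar R) -> \bar R :=
  match m return ('rV[R]_m -> \bar R) -> \bar R with
  | 0 => fun f => f 0
  | m'.+1 => fun f =>
      (\int[@lebesgue_measure R]_t
         iint (fun v : 'rV[R]_m' => f (row_mx (const_mx t : 'rV[R]_1) v)))%E
  end.
Definition on_set m (A : set 'rV[R]_m) (f : 'rV[R]_m -> \bar R) (x : 'rV[R]_m) : \bar R :=
  if x \in A then f x else 0%E.

Definition borel m (A : set 'rV[R]_m) := <<s [set U : set 'rV[R]_m | open U] >> A.
Definition null_set m (N : set 'rV[R]_m) :=
  exists B, borel B /\ N `<=` B /\ iint (on_set B (fun _ => 1%E)) = 0%E.
Definition L1loc m (O : set 'rV[R]_m) (u : 'rV[R]_m -> \bar R) :=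
  (forall B : set (\bar R), measurable B -> borel (O `&` u @^-1` B)) /\
  forall K, compact K -> K `<=` O -> (iint (on_set K (fun x => `|u x|)) < +oo)%E.

Definition usc_on m (O : set 'rV[R]_m) (u : 'rV[R]_m -> \bar R) :=
  forall x, O x -> forall c : R, (u x < c%:E)%E -> \forall y \near x, (u y < c%:E)%E.
Definition full_near m (A : set 'rV[R]_m) (x0 : 'rV[R]_m) :=
  exists V, nbhs x0 V /\ null_set (V `\` A).
Definition strongly_usc m (O : set 'rV[R]_m) (u : 'rV[R]_m -> \bar R) :=
  usc_on O u /\
  forall x0, O x0 -> forall A, full_near A x0 ->
    u x0 = ereal_inf [set ereal_sup (u @` (V `&` (A `\ x0))) | V in nbhs x0].

Definition alpha_sh n (a : pt n -> 'M[R[i]]_n) (O : set (pt n)) (u : pt n -> \bar R) :=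
  (forall x, O x -> u x = -oo%E) \/
  ((forall x, O x -> (u x < +oo)%E) /\ L1loc O u /\ strongly_usc O u /\
   forall w, test_fun O w ->
     (0 <= iint (on_set O (fun x => u x * (Lop a w x)%:E)))%E).

Definition bounded_domain n (D : set (pt n)) :=
  open D /\ connected D /\ D !=set0 /\ exists M : R, forall z, D z -> `|z| <= M.

Definition alpha_regular n (a : pt n -> 'M[R[i]]_n) (D : set (pt n)) :=
  exists rho, alpha_sh a D rho /\ (forall z, D z -> (rho z < 0)%E) /\
    forall xi, (closure D `\` D) xi -> forall e : R, 0 < e ->
      exists2 d : R, 0 < d & forall z, D z -> `|z - xi| < d -> ((- e)%:E < rho z)%E.

Definition Ucl n (a : pt n -> 'M[R[i]]_n) (E D : set (pt n)) (psi : pt n -> R)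
  (u : pt n -> \bar R) :=
  alpha_sh a D u /\ (forall z, D z -> (u z < 0)%E) /\
  (forall z, E z -> (u z <= (psi z)%:E)%E).
Definition omega n (a : pt n -> 'M[R[i]]_n) (E D : set (pt n)) (psi : pt n -> R)
  (z : pt n) : \bar R :=
  ereal_sup [set u z | u in Ucl a E D psi].
Definition omega_star n (a : pt n -> 'M[R[i]]_n) (E D : set (pt n)) (psi : pt n -> R)
  (z : pt n) : \bar R :=
  ereal_inf [set ereal_sup (omega a E D psi @` (V `&` D)) | V in nbhs z].

End AlphaSH.

(* Both bounds follow from the homogeneity and monotonicity of omega* in psi:
   positive multiples of alpha-subharmonic functions are alpha-subharmonic, so
   omega*(c psi) = c omega*(psi) for c > 0, while on E
   (-inf psi) (-1) <= psi <= (-sup psi) (-1).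
   For empty E the two bounds are -oo * omega* and +oo * omega*, so one needs
   omega*(., set0, D) = 0. The positive multiples of the exhaustion rho of D
   show omega >= 0 wherever rho is finite, and rho is finite somewhere in every
   neighbourhood: it is not identically -oo since it tends to 0 at the
   (nonempty) boundary of D, hence it is locally integrable, so it cannot be
   -oo on a cube. *)
From HB Require Import structures.
From mathcomp Require Import all_boot all_order all_algebra.
From mathcomp Require Import all_classical all_reals all_analysis measurable_realfun.
From mathcomp Require Import complex lra.
Set Implicit Arguments.
Unset Strict Implicit.
Unset Printing Implicit Defensive.
Import Order.TTheory GRing.Theory Num.Theory.
Import numFieldNormedType.Exports.
Local Open Scope classical_set_scope.
Local Open Scope ring_scope.

Section positive_scaling.
Local Open Scope ereal_scope.
Context {R : realType}.

Lemma gt0_muleBr (k : R) (x y : \bar R) : (0 < k)%R ->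
  k%:E * (x - y) = k%:E * x - k%:E * y.
Proof.
move=> k0; have kNy : k%:E * -oo = -oo by rewrite mulrNy gtr0_sg // mul1e.
have ky : k%:E * +oo = +oo by rewrite mulry gtr0_sg // mul1e.
by case: x => [x| |]; case: y => [y| |]; rewrite /= ?ky ?kNy // -EFinB -!EFinM mulrBr.
Qed.

Import HBNNSimple.

Lemma sup_sintegral_pZl d (T : measurableType d) (mu : {measure set T -> \bar R})
    (f : T -> \bar R) (k : R) : (0 < k)%R ->
  ereal_sup [set sintegral mu h | h in
    [set h : {nnsfun T >-> R} | forall x, (h x)%:E <= k%:E * f x]]
  = k%:E * ereal_sup [set sintegral mu h | h in
    [set h : {nnsfun T >-> R} | forall x, (h x)%:E <= f x]].
Proof.
move=> k0; rewrite -ereal_sup_pZl //; congr ereal_sup.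
have kV0 : (0 <= k^-1)%R by rewrite invr_ge0 ltW.
apply/seteqP; split => y.
- move=> [h hle <-]; exists (sintegral mu (scale_nnsfun h kV0)).
    exists (scale_nnsfun h kV0) => // x /=.
    by rewrite EFinM -(@lee_pmul2l _ k%:E) ?lte_fin // muleA -EFinM mulfV ?gt_eqF // mul1r.
  by rewrite sintegralrM muleA -EFinM mulfV ?gt_eqF // mul1e.
- move=> [_ [h hle <-] <-]; exists (scale_nnsfun h (ltW k0)); last by rewrite sintegralrM.
  by move=> x /=; rewrite EFinM lee_pmul2l ?lte_fin.
Qed.

(* No measurability is assumed: the integral is unfolded to suprema of simple integrals. *)
Lemma integral_pZl d (T : measurableType d) (mu : {measure set T -> \bar R})
    (D : set T) (f : T -> \bar R) (k : R) : (0 < k)%R ->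
  \int[mu]_(x in D) (k%:E * f x) = k%:E * \int[mu]_(x in D) f x.
Proof.
move=> k0; rewrite /integral /= erestrict_scale ge0_funeposM ?ge0_funenegM ?ltW //.
by rewrite !sup_sintegral_pZl // gt0_muleBr.
Qed.

Lemma iint_pZl m (f : 'rV[R]_m -> \bar R) (k : R) : (0 < k)%R ->
  iint (fun x => k%:E * f x) = k%:E * iint f.
Proof.
move=> k0; elim: m f => [|m IH] f //=.
under eq_integral => t _ do rewrite IH.
exact: integral_pZl.
Qed.

End positive_scaling.

Section omega_scaling.
Local Open Scope ereal_scope.
Context {R : realType} (n : nat) (a : @pt R n -> 'M[R[i]]_n).

Lemma alpha_sh_pZl (O : set (@pt R n)) (u : @pt R n -> \bar R) (k : R) : (0 < k)%R ->
  alpha_sh a O u -> alpha_sh a O (fun x => k%:E * u x).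
Proof.
move=> k0 [uNy | [ulty [[umeas uint] [[uusc ulim] uLop]]]].
  by left => x Ox; rewrite uNy // mulrNy gtr0_sg // mul1e.
right; split; [|split; [split|split; [split|]]].
- by move=> x Ox; apply: lte_mul_pinfty; rewrite ?lee_fin ?ulty // ltW.
- move=> B mB.
  have mkB := @measurable_funeM _ _ R setT id k%:E (@measurable_id _ _ setT) measurableT B mB.
  have := umeas _ mkB; congr borel.
  by apply/seteqP; split => x /= [Ox H]; split => //; case: H.
- move=> K cK KO.
  rewrite (_ : on_set K _ = fun x => k%:E * on_set K (fun x => `|u x|) x); last first.
    apply/funext => x; rewrite /on_set; case: ifP => _; last by rewrite mule0.
    by rewrite abseM /= gtr0_norm.
  by rewrite iint_pZl //; apply: lte_mul_pinfty; rewrite ?lee_fin ?uint // ltW.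
- move=> x Ox c; rewrite -lte_pdivlMl // -EFinM => /(uusc x Ox).
  by apply: filterS => y; rewrite EFinM lte_pdivlMl.
- move=> x0 Ox0 A fA; rewrite (ulim x0 Ox0 A fA) -ereal_inf_pZl //; congr ereal_inf.
  rewrite image_comp; apply: eq_imagel => V _ /=.
  by rewrite -ereal_sup_pZl // image_comp.
- move=> w tw.
  rewrite (_ : on_set O _ = fun x => k%:E * on_set O (fun x => u x * (Lop a w x)%:E) x).
    by rewrite iint_pZl // mule_ge0 ?uLop // lee_fin ltW.
  by apply/funext => x; rewrite /on_set; case: ifP => _; rewrite ?mule0 ?muleA.
Qed.

Variables (E D : set (@pt R n)).

Lemma le_omega_scale (psi1 psi2 : @pt R n -> R) (c : R) : (0 < c)%R ->
  (forall w, E w -> c * psi1 w <= psi2 w)%R ->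
  forall z, c%:E * omega a E D psi1 z <= omega a E D psi2 z.
Proof.
move=> c0 le_psi z; rewrite /omega -ereal_sup_pZl //.
apply: ge_ereal_sup => _ [_ [u [shu [uneg uE]] <-] <-].
apply: ereal_sup_ubound; exists (fun x => c%:E * u x) => //.
split; [exact: alpha_sh_pZl | split => w].
- by move=> Dw; rewrite pmule_rlt0 ?lte_fin // uneg.
- move=> Ew; apply: (@le_trans _ _ (c * psi1 w)%:E); last by rewrite lee_fin le_psi.
  by rewrite EFinM lee_pmul2l ?lte_fin ?uE.
Qed.

Lemma le_omega_star_scale (psi1 psi2 : @pt R n -> R) (c : R) : (0 < c)%R ->
  (forall w, E w -> c * psi1 w <= psi2 w)%R ->
  forall z, c%:E * omega_star a E D psi1 z <= omega_star a E D psi2 z.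
Proof.
move=> c0 le_psi z; rewrite /omega_star -ereal_inf_pZl //.
apply: le_ereal_inf_tmp => _ [V NV <-].
apply: (le_trans (ereal_inf_lbound _)).
  by exists (ereal_sup (omega a E D psi1 @` (V `&` D))) => //; exists V.
rewrite -ereal_sup_pZl //; apply: ge_ereal_sup => _ [_ [w Vw <-] <-].
apply: (le_trans (le_omega_scale c0 le_psi w)).
by apply: ereal_sup_ubound; exists w.
Qed.

Lemma le_omega_star (psi1 psi2 : @pt R n -> R) :
  (forall w, E w -> psi1 w <= psi2 w)%R ->
  forall z, omega_star a E D psi1 z <= omega_star a E D psi2 z.
Proof.
move=> le_psi z; rewrite -[leLHS]mul1e.
by apply: le_omega_star_scale => // w Ew; rewrite mul1r le_psi.
Qed.

Lemma omega_star_pZl (psi : @pt R n -> R) (c : R) : (0 < c)%R ->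
  forall z, omega_star a E D (fun w => c * psi w)%R z = c%:E * omega_star a E D psi z.
Proof.
move=> c0 z; apply/eqP; rewrite eq_le le_omega_star_scale // andbT.
have cV0 : (0 < c^-1)%R by rewrite invr_gt0.
rewrite -(@lee_pmul2l _ c^-1%:E) ?lte_fin // muleA -EFinM mulVf ?gt_eqF // mul1e.
by apply: le_omega_star_scale => // w _; rewrite mulrA mulVf ?gt_eqF // mul1r.
Qed.

End omega_scaling.

Lemma open_bounded_boundary (R : realType) (V : normedModType R) (D : set V) (e : V) :
  e != 0 -> open D -> D !=set0 -> (exists M : R, forall z, D z -> `|z| <= M) ->
  exists xi, closure D xi /\ ~ D xi.
Proof.
move=> e0 oD [z0 Dz0] [M DM]; apply: contrapT => no_boundary.
have cD : closed D.
  apply/closure_id/seteqP; split => [x|x cx]; first exact: subset_closure.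
  by apply: contrapT => Dx; apply: no_boundary; exists x.
pose f t : V := z0 + t *: e.
have fC : continuous f.
  by move=> t; apply: cvgD; [exact: cvg_cst | apply: cvgZ; [exact: cvg_id | exact: cvg_cst]].
have line_in_D : f @^-1` D = setT.
  have RC : connected [set: R] by apply/connected_intervalP => ? ? ? ? ? ?.
  apply: RC; first by exists 0; rewrite /f /= scale0r addr0.
    by exists (f @^-1` D); [exact: open_comp | rewrite setTI].
  by exists (f @^-1` D); [exact: preimage_closed | rewrite setTI].
have M0 : 0 <= M := le_trans (normr_ge0 _) (DM _ Dz0).
pose T := (M + `|z0| + 1) / `|e|.
have T_e : `|T *: e| = M + `|z0| + 1.
  have T0 : 0 <= T by rewrite divr_ge0 // addr_ge0 ?addr_ge0.
  by rewrite normrZ ger0_norm // -mulrA mulVf ?mulr1 // normr_eq0.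
have fT : `|f T| <= M by apply: DM; rewrite -[D _]/((f @^-1` D) T) line_in_D.
have : `|T *: e| <= `|f T| + `|z0|.
  by rewrite (_ : T *: e = f T - z0) ?(le_trans (ler_normB _ _)) // /f addrC addKr.
rewrite T_e; lra.
Qed.

Section cubes.
Context {R : realType}.

Definition cube m (c : 'rV[R]_m) (r : R) : set 'rV[R]_m :=
  [set v | forall i, `[c ord0 i - r, c ord0 i + r]%classic (v ord0 i)].

Lemma cube_compact m (c : 'rV[R]_m) r : compact (cube c r).
Proof.
apply: (@rV_compact _ _ (fun i => `[c ord0 i - r, c ord0 i + r]%classic)) => i.
exact: segment_compact.
Qed.

Lemma cube_sub_ball m (c : 'rV[R]_m) r e : 0 <= r -> r < e -> cube c r `<=` ball c e.
Proof.
move=> r0 re v cv; split => [|i j]; first exact: le_lt_trans re.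
rewrite (ord1 i); have := cv j; rewrite /= in_itv /= => /andP[lo hi].
by rewrite /ball /= ltr_norml; apply/andP; split; lra.
Qed.

Lemma iint0 m : iint (fun _ : 'rV[R]_m => 0%E) = 0%E.
Proof.
elim: m => [|m IH] //=.
by under eq_integral => t _ do rewrite IH; exact: integral0.
Qed.

Lemma row_mx_cube m (c : 'rV[R]_m.+1) r t (v : 'rV[R]_m) :
  (row_mx (const_mx t : 'rV[R]_1) v \in cube c r) =
  (t \in `[c ord0 (lshift m (@ord0 0)) - r, c ord0 (lshift m (@ord0 0)) + r]%classic) &&
  (v \in cube (\row_j c ord0 (rshift 1 j)) r).
Proof.
apply/idP/andP => [/set_mem tv|[/set_mem tI /set_mem vc]].
  split; apply: mem_set.
    by have := tv (lshift m (@ord0 0)); rewrite (@row_mxEl R 1 1 m) mxE.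
  by move=> j; have := tv (rshift 1 j); rewrite (@row_mxEr R 1 1 m) mxE.
apply: mem_set => i; case: (@split_ordP 1 m i) => k ->.
  by rewrite (@row_mxEl R 1 1 m) mxE (ord1 k).
by rewrite (@row_mxEr R 1 1 m); have := vc k; rewrite mxE.
Qed.

Lemma iint_cube m (c : 'rV[R]_m) (r : R) : 0 < r ->
  iint (on_set (cube c r) (fun _ => +oo%E)) = +oo%E.
Proof.
move=> r0; elim: m c => [|m IH] c /=.
  by rewrite /on_set ifT //; apply: mem_set => -[].
pose I := `[c ord0 (lshift m (@ord0 0)) - r, c ord0 (lshift m (@ord0 0)) + r]%classic.
have slice t : iint (fun v : 'rV_m =>
    on_set (cube c r) (fun _ => +oo%E) (row_mx (const_mx t : 'rV_1) v))
    = (if t \in I then +oo else 0)%E.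
  case: ifPn => tI.
    rewrite -[RHS](IH (\row_j c ord0 (rshift 1 j))); congr iint; apply/funext => v.
    by rewrite /on_set row_mx_cube tI.
  rewrite -[RHS](@iint0 m); congr iint; apply/funext => v.
  by rewrite /on_set row_mx_cube (negbTE tI).
under eq_integral => t _ do rewrite slice.
rewrite (_ : (fun t => _) = cst +oo%E \_ I) // -integral_mkcond.
rewrite integral_cst; last exact: measurable_itv.
have := @lebesgue_measure_itv R `[c ord0 (lshift m (@ord0 0)) - r, c ord0 (lshift m (@ord0 0)) + r].
rewrite /= lte_fin ltrD2l gt0_cp // => ->.
by rewrite -EFinD mulyr gtr0_sg ?mul1e //; lra.
Qed.

End cubes.

Lemma L1loc_neq_ninfty_near (R : realType) m (O W : set 'rV[R]_m)
    (u : 'rV[R]_m -> \bar R) (z : 'rV[R]_m) :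
  L1loc O u -> nbhs z W -> W `<=` O -> exists2 w, W w & u w != -oo%E.
Proof.
move=> [_ uint] /nbhs_ballP[e /= e0 zeW] WO; apply: contrapT => uNy.
have {}uNy w : W w -> u w = -oo%E.
  by move=> Ww; apply: contrapT => /eqP uw; apply: uNy; exists w.
have KW : cube z (e / 2) `<=` W.
  by move=> y Ky; apply: zeW; apply: (@cube_sub_ball R _ z (e / 2) e) Ky; lra.
have := uint _ (@cube_compact R _ z (e / 2)) (subset_trans KW WO).
rewrite (_ : on_set _ _ = on_set (cube z (e / 2)) (fun _ => +oo%E)) ?iint_cube ?divr_gt0 //.
by apply/funext => x; rewrite /on_set; case: ifP => // /set_mem Kx; rewrite uNy //; exact: KW.
Qed.

Section empty_target.
Local Open Scope ereal_scope.
Context {R : realType} (n : nat) (a : @pt R n -> 'M[R[i]]_n) (D : set (@pt R n)).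

Lemma exhaustion_neq_ninfty_near (rho : @pt R n -> \bar R) z (W : set (@pt R n)) :
  (0 < n)%N -> bounded_domain D -> alpha_sh a D rho ->
  (forall xi, (closure D `\` D) xi -> forall e : R, (0 < e)%R ->
    exists2 d : R, (0 < d)%R & forall w, D w -> (`|w - xi| < d)%R -> (- e)%:E < rho w) ->
  D z -> nbhs z W -> exists2 w, (W `&` D) w & rho w != -oo.
Proof.
move=> n0 [oD [_ [D0 Dbd]]] [rhoNy | [_ [rhoL1 _]]] rho_bd Dz zW; last first.
  apply: (@L1loc_neq_ninfty_near R _ D _ rho z rhoL1 _ (@subIsetr _ _ _)).
  by apply: filterI => //; exact: oD.
pose j := lshift n (Ordinal n0).
have e0 : (delta_mx ord0 j : @pt R n) != 0%R.
  by apply/eqP => /matrixP/(_ ord0 j); rewrite !mxE eqxx /=; apply/eqP; rewrite oner_eq0.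
have [xi [Dxi nDxi]] := open_bounded_boundary e0 oD D0 Dbd.
have [d d0 rho_gt] := rho_bd xi (conj Dxi nDxi) 1%R ltr01.
have [w [Dw xiw]] := Dxi _ (nbhsx_ballx xi d d0).
suff : (- 1)%:E < rho w by rewrite rhoNy.
by apply: rho_gt Dw _; rewrite distrC; move: xiw; rewrite -ball_normE.
Qed.

Lemma omega_le0 (E : set (@pt R n)) (psi : @pt R n -> R) w :
  D w -> omega a E D psi w <= 0.
Proof. by move=> Dw; apply: ge_ereal_sup => _ [u [_ [uneg _]] <-]; exact/ltW/uneg. Qed.

Lemma omega_set0_ge0 (psi : @pt R n -> R) (rho : @pt R n -> \bar R) w :
  alpha_sh a D rho -> (forall x, D x -> rho x < 0) -> D w -> rho w != -oo ->
  0 <= omega a set0 D psi w.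
Proof.
move=> shrho rho_lt0 Dw; have := rho_lt0 w Dw.
case rhow : (rho w) => [r| |] //; rewrite lte_fin => r0 _.
apply/lee_subgt0Pr => e e0; rewrite sub0e.
have k0 : (0 < e / - r)%R by rewrite divr_gt0 // oppr_gt0.
apply: ereal_sup_ubound; exists (fun x => (e / - r)%:E * rho x).
  split; [exact: alpha_sh_pZl | split => x //].
  by move=> Dx; rewrite pmule_rlt0 ?lte_fin // rho_lt0.
by rewrite rhow -EFinM invrN mulrN mulNr divfK ?lt_eqF.
Qed.

Lemma omega_star_set0 (psi : @pt R n -> R) z : (0 < n)%N ->
  bounded_domain D -> alpha_regular a D -> D z -> omega_star a set0 D psi z = 0.
Proof.
move=> n0 bD [rho [shrho [rho_lt0 rho_bd]]] Dz; apply/eqP; rewrite eq_le; apply/andP; split.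
  apply: ge_ereal_inf; exists (ereal_sup (omega a set0 D psi @` (setT `&` D))).
    by exists setT => //; exact: filterT.
  by apply: ge_ereal_sup => _ [w [_ Dw] <-]; exact: omega_le0.
apply: le_ereal_inf_tmp => _ [V zV <-].
have [w [Vw Dw] rhow] := exhaustion_neq_ninfty_near n0 bD shrho rho_bd Dz zV.
apply: le_ereal_sup_tmp; exists (omega a set0 D psi w); first by exists w.
exact: omega_set0_ge0 rhow.
Qed.

End empty_target.

Theorem lemma4p3 (R : realType) (n : nat) (U : set (@pt R n))
  (a : @pt R n -> 'M[R[i]]_n) (D E : set (@pt R n)) (psi : @pt R n -> R) :
  (0 < n)%N ->
  closed_strictly_positive_form U a -> D `<=` U ->
  bounded_domain D -> alpha_regular a D ->
  E `<=` D ->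
  (exists M : R, forall w, E w -> `|psi w| <= M) ->
  (ereal_sup [set (psi w)%:E | w in E] < 0)%E ->
  forall z, D z ->
    ((- ereal_inf [set (psi w)%:E | w in E]) * omega_star a E D (fun _ => (-1)%R) z
       <= omega_star a E D psi z)%E /\
    (omega_star a E D psi z
       <= (- ereal_sup [set (psi w)%:E | w in E]) * omega_star a E D (fun _ => (-1)%R) z)%E.
Proof.
move=> n0 _ _ bD Dreg _ [M psiM] sup_lt0 z Dz.
have [->|/set0P[w0 Ew0]] := eqVneq E set0.
  by rewrite !omega_star_set0 // !mule0.
have psiE_lb : has_lbound (psi @` E).
  by exists (- M) => _ [w Ew <-]; have := psiM w Ew; rewrite ler_norml => /andP[].
have psiE_ub : has_ubound (psi @` E).
  by exists M => _ [w Ew <-]; have := psiM w Ew; rewrite ler_norml => /andP[].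
have psiE0 : psi @` E !=set0 by exists (psi w0), w0.
rewrite -image_comp ereal_inf_EFin ?ereal_sup_EFin //.
move: sup_lt0; rewrite -image_comp ereal_sup_EFin // lte_fin.
set s := sup _; set i := inf _ => s_lt0.
have le_i w : E w -> i <= psi w by move=> Ew; apply: ge_inf => //; exists w.
have le_s w : E w -> psi w <= s by move=> Ew; apply: ub_le_sup => //; exists w.
have i_lt0 : i < 0 := le_lt_trans (le_i w0 Ew0) (le_lt_trans (le_s w0 Ew0) s_lt0).
rewrite -!EFinN -!omega_star_pZl ?oppr_gt0 //.
by split; apply: le_omega_star => w Ew; rewrite mulrN1 opprK; [apply: le_i | apply: le_s].
Qed.
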